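(* Let $f\in L^1(\mathbb{R}^2)$ and suppose there is $R>0$ with $\operatorname{supp} f\subset B(0;R)$. Let $C>0$ be a constant such that $C\|u\|_{L^2(\mathbb{R}^2)}\le \int_{\mathbb{R}^2}|u_x|+|u_y|$ for all $u\in BV(\mathbb{R}^2)$, and set $\lambda_0:=\frac{C}{R\sqrt{\pi}}$. If $0\le\lambda<\lambda_0$, then $u=0$ is the unique minimizer of $F_1$ over $BV(\mathbb{R}^2)$ and the unique minimizer of $\overline{F_1}$ over $BV(\mathbb{R}^2;\{0,1\})$.
   Context: For $u\in L^1_{loc}(\mathbb{R}^2)$ the anisotropic total variation is $\int_{\mathbb{R}^2}|u_x|+|u_y|:=\sup\{\int_{\mathbb{R}^2}u\,\mathrm{div}\,v : v\in C^1_c(\mathbb{R}^2;\mathbb{R}^2),\ |v(x)|_\infty\le 1\ \forall x\}$, where $|(a,b)|_\infty=\max(|a|,|b|)$. $BV(\mathbb{R}^2)$ is the space of $u\in L^1(\mathbb{R}^2)$ with finite (isotropic) total variation, and for $A\subset\mathbb{R}$, $BV(\mathbb{R}^2;A)$ denotes those $u\in BV(\mathbb{R}^2)$ with $u(x)\in A$ for a.e. $x$. For a fidelity parameter $\lambda\ge0$ and signal $f\in L^1(\mathbb{R}^2)$: $F_1(u)=\int_{\mathbb{R}^2}|u_x|+|u_y|+\lambda\|u-f\|_{L^1(\mathbb{R}^2)}$ for $u\in BV(\mathbb{R}^2)$, and $\overline{F_1}$ is the same expression restricted to $u\in BV(\mathbb{R}^2;\{0,1\})$. *)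

From HB Require Import structures.
From mathcomp Require Import all_boot all_order all_algebra.
From mathcomp Require Import all_classical all_reals all_analysis.
Set Implicit Arguments. Unset Strict Implicit. Unset Printing Implicit Defensive.
Import Order.TTheory GRing.Theory Num.Theory.
Import numFieldNormedType.Exports.
Local Open Scope classical_set_scope.
Local Open Scope ring_scope.

Section Defs.
Variable R : realType.

Definition leb2 := ((@lebesgue_measure R) \x (@lebesgue_measure R))%E.

Definition C1_R2 (g : R * R -> R) : Prop :=
  (forall x, derivable g x (1, 0)) /\ (forall x, derivable g x (0, 1)) /\
  continuous (fun x => 'D_(1, 0) g x) /\ continuous (fun x => 'D_(0, 1) g x).

Definition div2 (v1 v2 : R * R -> R) : R * R -> R :=
  fun x => 'D_(1, 0) v1 x + 'D_(0, 1) v2 x.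

Definition C1c_field (v1 v2 : R * R -> R) : Prop :=
  C1_R2 v1 /\ C1_R2 v2 /\ compact (closure [set x | v1 x != 0 \/ v2 x != 0]).

Definition aniso_TV (u : R * R -> R) : \bar R :=
  ereal_sup [set (\int[leb2]_x (u x * div2 v.1 v.2 x)%:E)%E
            | v in [set v : (R * R -> R) * (R * R -> R) | C1c_field v.1 v.2 /\
                        (forall x, `|v.1 x| <= 1 /\ `|v.2 x| <= 1)]].

Definition iso_TV (u : R * R -> R) : \bar R :=
  ereal_sup [set (\int[leb2]_x (u x * div2 v.1 v.2 x)%:E)%E
            | v in [set v : (R * R -> R) * (R * R -> R) | C1c_field v.1 v.2 /\
                        (forall x, v.1 x ^+ 2 + v.2 x ^+ 2 <= 1)]].

Definition L1 (u : R * R -> R) : Prop :=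
  leb2.-integrable setT (fun x => (u x)%:E).

Definition BV (u : R * R -> R) : Prop := L1 u /\ (iso_TV u < +oo)%E.

Definition BV01 (u : R * R -> R) : Prop :=
  BV u /\ {ae leb2, forall x, u x = 0 \/ u x = 1}.

Definition L1norm (g : R * R -> R) : \bar R := (\int[leb2]_x (`|g x|)%:E)%E.

(* F_1(u) = int |u_x|+|u_y| + lambda ||u - f||_{L^1} *)
Definition F1 (lam : R) (f u : R * R -> R) : \bar R :=
  (aniso_TV u + lam%:E * L1norm (fun x => (u x - f x)%R))%E.

Definition minimizer (S : (R * R -> R) -> Prop) (F : (R * R -> R) -> \bar R)
  (u : R * R -> R) : Prop :=
  S u /\ forall w, S w -> (F u <= F w)%E.

End Defs.

(* Since f vanishes outside the disk B of radius R,
     ||f||_1 <= ||u - f||_1 + int_B |u| <= ||u - f||_1 + R sqrt(pi) ||u||_2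
   by Cauchy-Schwarz (|B| = pi R^2, computed by Fubini and the substitution
   x = R sin t), and the Poincare-type hypothesis bounds ||u||_2 by TV(u) / C.
   Hence F_1(0) = lam ||f||_1 <= lam ||u - f||_1 + k TV(u) with
   k = lam R sqrt(pi) / C < 1, so F_1(0) <= F_1(u), and equality forces
   TV(u) = 0, hence ||u||_2 = 0, i.e. u = 0 almost everywhere. *)

From HB Require Import structures.
From mathcomp Require Import all_boot all_order all_algebra.
From mathcomp Require Import all_classical all_reals all_analysis.
From mathcomp Require Import ring lra.
From mathcomp Require Import measurable_realfun.
Import Order.TTheory GRing.Theory Num.Theory.
Import numFieldNormedType.Exports.
Local Open Scope classical_set_scope.
Local Open Scope ring_scope.

Section integral_ae0.
Context d (T : measurableType d) (R : realType) (mu : {measure set T -> \bar R}).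
Local Open Scope ereal_scope.
Import HBNNSimple.

(* No measurability of [f] is needed: every simple function below [f] vanishes
   almost everywhere. *)
Lemma ge0_integral_ae0 (f : T -> \bar R) : (forall x, 0 <= f x) ->
  {ae mu, forall x, f x = 0} -> \int[mu]_x f x = 0.
Proof.
move=> f0 fae; apply/eqP; rewrite eq_le integral_ge0 // andbT.
rewrite ge0_integralTE //; apply/ge_ereal_sup => _ [h /= hf <-].
rewrite -integralT_nnsfun (ae_eq_integral (cst 0)) ?integral0 //.
- apply/measurable_EFinP; exact: measurable_funPT.
- apply: filterS fae => x fx0 _ /=; have := hf x; rewrite fx0 => hx0.
  by apply/eqP; rewrite eq_le hx0 lee_fin fun_ge0.
Qed.

Lemma integral_ae0 (f : T -> \bar R) :
  {ae mu, forall x, f x = 0} -> \int[mu]_x f x = 0.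
Proof.
move=> fae.
have fpos0 : {ae mu, forall x, f^\+ x = 0}.
  by apply: filterS fae => x fx0; rewrite funeposE fx0 maxxx.
have fneg0 : {ae mu, forall x, f^\- x = 0}.
  by apply: filterS fae => x fx0; rewrite funenegE fx0 oppe0 maxxx.
by rewrite integralE !ge0_integral_ae0 ?subee // => x; rewrite ?funepos_ge0 ?funeneg_ge0.
Qed.

End integral_ae0.

Lemma sqr_lt_norm_sqrt {R : rcfType} (y a : R) : (y ^+ 2 < a) = (`|y| < Num.sqrt a).
Proof.
have [a0|a0] := leP a 0; last by rewrite -sqrtr_sqr ltr_sqrt.
rewrite (eqP (_ : Num.sqrt a == 0)) ?sqrtr_eq0 // [RHS]ltNge normr_ge0.
by apply/negbTE; rewrite -leNgt (le_trans a0) ?sqr_ge0.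
Qed.

Lemma derivable_oo_LRcontinuousT {R : realFieldType} (f : R -> R) (a b : R) :
  (forall x, derivable f x 1) -> derivable_oo_LRcontinuous f a b.
Proof.
move=> df; have cf x : {for x, continuous f}.
  by apply: differentiable_continuous; rewrite -derivable1_diffP.
by split=> [x _||];
  [exact: df|exact: cvg_at_right_filter (cf a)|exact: cvg_at_left_filter (cf b)].
Qed.

Section disk.
Context {R : realType}.
Local Notation mu := (@lebesgue_measure R).

Lemma integral_cos2_pihalf (c : R) :
  (\int[mu]_(t in `[(- (pi / 2))%R, (pi / 2)%R]) (c * cos t ^+ 2)%:E)%E =
  (c * pi / 2)%:E.
Proof.
pose F t := c / 2 * (t + sin t * cos t).
have dF (t : R) : is_derive t 1 F (c * cos t ^+ 2).
  have -> : F = (c / 2) *: (id + (@sin R) * (@cos R)) by [].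
  have := is_deriveZ (c / 2) (is_deriveD (is_derive_id t 1)
    (is_deriveM (is_derive_sin t) (is_derive_cos t))).
  move=> dF; apply: is_derive_eq.
  by rewrite /GRing.scale /= mulrN -!expr2 sin2cos2; field.
have pi2_gt0 : 0 < pi / 2 :> R by rewrite divr_gt0 ?pi_gt0.
rewrite (@continuous_FTC2 _ (fun t => c * cos t ^+ 2) F) //.
- rewrite /F sin_pihalf cos_pihalf sinN sin_pihalf cosN cos_pihalf -EFinD.
  by congr (_%:E); field.
- lra.
- apply: continuous_subspaceT.
  rewrite (_ : (fun t => _) = cst c \* ((@cos R) \* (@cos R))); last first.
    by apply/funext => s; rewrite /= expr2.
  move=> t; apply: continuousM; first exact: cst_continuous.
  by apply: continuousM; exact: continuous_cos.
- by apply: derivable_oo_LRcontinuousT => t; case: (dF t).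
- by move=> t _; rewrite derive1E; apply: derive_val; exact: dF.
Qed.

Lemma integral_semicircle (r : R) : 0 < r ->
  (\int[mu]_x (2 * Num.sqrt (r ^+ 2 - x ^+ 2))%:E)%E = (pi * r ^+ 2)%:E.
Proof.
move=> r0; pose G x := 2 * Num.sqrt (r ^+ 2 - x ^+ 2); pose F t := r * sin t.
have G_out x : x \notin `[- r, r] -> G x = 0.
  rewrite in_itv /= -ler_norml -ltNge ltr_normr => xr.
  rewrite /G (eqP (_ : Num.sqrt _ == 0)) ?mulr0 // sqrtr_eq0.
  by case/orP: xr => xr; nra.
have cG : continuous G.
  move=> x; have cx : {for x, continuous (fun y : R => r ^+ 2 - y ^+ 2)}.
    by apply: continuousB; [exact: cst_continuous|exact: exprn_continuous].
  have c2 : {for x, continuous (cst (2 : R))} by exact: cst_continuous.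
  exact: continuousM c2 (continuous_comp cx (@sqrt_continuous R _)).
have dF (t : R) : is_derive t 1 F (r * cos t) by exact: is_deriveZ.
have F' : F^`()%classic = fun t => r * cos t.
  by apply/funext => t; rewrite derive1E; apply: derive_val.
have cF' : continuous (fun t => r * cos t).
  move=> t; have cr : {for t, continuous (cst r)} by exact: cst_continuous.
  exact: continuousM cr (@continuous_cos R t).
have pi2_gt0 : 0 < pi / 2 :> R by rewrite divr_gt0 ?pi_gt0.
have [Fa Fb] : F (- (pi / 2)) = - r /\ F (pi / 2) = r.
  by rewrite /F sinN sin_pihalf mulrN1 mulr1.
rewrite (_ : (fun x => _) = (fun x => (G x)%:E) \_ `[- r, r]); last first.
  apply/funext => x; rewrite patchE; case: ifPn => // xn.
  by rewrite -/(G x) G_out //; apply: contra xn => xr; rewrite inE.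
(* substitute x = r sin t on [-pi/2, pi/2] *)
rewrite -integral_mkcond -Fa -{1}Fb integration_by_substitution_increasing; first last.
- exact: continuous_subspaceT.
- by apply: derivable_oo_LRcontinuousT => t; case: (dF t).
- by rewrite F'; apply/cvg_ex; exists (r * cos (pi / 2));
    exact: cvg_at_left_filter (cF' _).
- by rewrite F'; apply/cvg_ex; exists (r * cos (- (pi / 2)));
    exact: cvg_at_right_filter (cF' _).
- by rewrite F' => t _; exact: cF'.
- by move=> x y xI yI xy; rewrite ltr_pM2l // ltr_sin.
- lra.
rewrite F' (_ : pi * r ^+ 2 = 2 * r ^+ 2 * pi / 2); last by field.
rewrite -integral_cos2_pihalf; apply: eq_integral => t; rewrite inE /= in_itv /= => tI.
have rcos_ge0 : 0 <= r * cos t by rewrite mulr_ge0 ?(ltW r0) ?cos_ge0_pihalf.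
change ((2 * Num.sqrt (r ^+ 2 - (r * sin t) ^+ 2) * (r * cos t))%:E =
  (2 * r ^+ 2 * cos t ^+ 2)%:E).
rewrite (_ : r ^+ 2 - (r * sin t) ^+ 2 = (r * cos t) ^+ 2); last first.
  by rewrite !exprMn cos2sin2; ring.
by rewrite sqrtr_sqr ger0_norm //; congr (_%:E); ring.
Qed.

Definition disk (r : R) := [set z : R * R | z.1 ^+ 2 + z.2 ^+ 2 < r ^+ 2].

Lemma measurable_disk (r : R) : measurable (disk r).
Proof.
have mnorm2 : measurable_fun setT (fun z : R * R => z.1 ^+ 2 + z.2 ^+ 2).
  by apply: measurable_funD; apply: measurable_funX.
rewrite (_ : disk r = setT `&` (fun z => z.1 ^+ 2 + z.2 ^+ 2) @^-1` `]-oo, r ^+ 2[).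
  exact: mnorm2.
by apply/seteqP; split => z; rewrite /disk /= in_itv /=; [move=> ?; split | case].
Qed.

Lemma lebesgue_measure_xsection_disk (r x : R) :
  mu (xsection (disk r) x) = (2 * Num.sqrt (r ^+ 2 - x ^+ 2))%:E.
Proof.
set s := Num.sqrt _.
have -> : xsection (disk r) x = `]- s, s[%classic.
  apply/seteqP; split => y; rewrite /xsection /disk /= in_itv /= -ltr_norml.
    by rewrite inE /= -sqr_lt_norm_sqrt ltrBrDl.
  by rewrite -sqr_lt_norm_sqrt ltrBrDl inE.
rewrite lebesgue_measure_itv /= lte_fin; case: ifPn => [_|].
  by rewrite -EFinD opprK -mulr2n mulr_natl.
rewrite -leNgt => s_le_Ns; suff -> : s = 0 by rewrite mulr0.
by have : 0 <= s := sqrtr_ge0 _; lra.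
Qed.

Lemma leb2_disk (r : R) : 0 < r -> leb2 (disk r) = (pi * r ^+ 2)%:E.
Proof.
move=> r0; rewrite -integral_semicircle //.
change (\int[mu]_x mu (xsection (disk r) x) =
        \int[mu]_x (2 * Num.sqrt (r ^+ 2 - x ^+ 2))%:E)%E.
by apply: eq_integral => x _; rewrite lebesgue_measure_xsection_disk.
Qed.
End disk.

Section ereal_absorb.
Context {R : realFieldType}.
Local Open Scope ereal_scope.

Lemma lee_absorb (a b t : \bar R) (k : R) : a <= b + k%:E * t ->
  a \is a fin_num -> 0 <= b -> 0 <= t -> (0 <= k < 1)%R ->
  a <= t + b /\ (t + b <= a -> t = 0).
Proof.
move=> abt a_fin b0 t0 /andP[k0 k1]; split.
  by rewrite addeC; apply: le_trans abt _; apply: leeD2l; rewrite gee_pMl // lee_fin ltW.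
move=> tba; have /fin_numPlt/andP[_ a_lty] := a_fin.
have [t_fin b_fin] : t \is a fin_num /\ b \is a fin_num.
  rewrite !ge0_fin_numE //; split; apply: le_lt_trans a_lty; apply: le_trans tba.
    exact: leeDl.
  exact: leeDr.
move: abt tba t0 b0; rewrite -(fineK a_fin) -(fineK b_fin) -(fineK t_fin).
rewrite -EFinM -!EFinD !lee_fin => abt tba t0 b0.
by congr (_%:E); apply/eqP; rewrite eq_le t0 andbT; nra.
Qed.

End ereal_absorb.

Section total_variation.
Context {R : realType}.
Local Notation mu2 := (@leb2 R).
Local Open Scope ereal_scope.

Lemma L1_measurable {u : R * R -> R} : L1 u -> measurable_fun setT u.
Proof. by case/integrableP => /measurable_EFinP. Qed.

Lemma L1norm_ge0 (g : R * R -> R) : 0 <= L1norm g.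
Proof. by apply: integral_ge0 => x _; rewrite lee_fin normr_ge0. Qed.

Lemma L1norm_fin_num (u : R * R -> R) : L1 u -> L1norm u \is a fin_num.
Proof. by case/integrableP => _; rewrite ge0_fin_numE ?L1norm_ge0. Qed.

(* Hoelder with p = q = 2: the indicator of the disk has L^2 norm r sqrt(pi). *)
Lemma L1norm_indic_disk_le {u : R * R -> R} {r : R} : (0 < r)%R ->
  measurable_fun setT u ->
  L1norm (\1_(disk r) \* u)%R <=
    (r * Num.sqrt pi)%:E * 'N[mu2]_2%:E[(fun x => (u x)%:E)].
Proof.
move=> r0 mu; have mdisk : measurable_fun setT (\1_(disk r) : R * R -> R).
  exact: measurable_indic (measurable_disk r).
have indic_N2 : 'N[mu2]_2%:E[EFin \o \1_(disk r)] = (r * Num.sqrt pi)%:E.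
  have indic_pow x : (`|\1_(disk r) x : R| `^ 2 = \1_(disk r) x)%R.
    by rewrite indicE; case: (x \in disk r); rewrite ?normr1 ?normr0 ?powR1 ?powR0.
  rewrite unlock /=; under eq_integral => x _ do rewrite indic_pow.
  rewrite integral_indic ?setIT //; last exact: measurable_disk.
  change (leb2 (disk r) `^ 2^-1 = (r * Num.sqrt pi)%:E).
  rewrite leb2_disk // poweR_EFin powR12_sqrt; last by rewrite mulr_ge0 ?pi_ge0 ?sqr_ge0.
  by rewrite sqrtrM ?pi_ge0 // sqrtr_sqr ger0_norm 1?mulrC //; exact: ltW.
have := @hoelder _ _ _ mu2 (\1_(disk r)) u 2 2 mdisk mu (@ltr0Sn R 1) (@ltr0Sn R 1).
by rewrite indic_N2 Lnorm1; apply; field.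
Qed.

Lemma L1norm_supported_disk_le {f u : R * R -> R} {r : R} :
  measurable_fun setT f -> measurable_fun setT u ->
  {ae mu2, forall x, (r ^+ 2 <= x.1 ^+ 2 + x.2 ^+ 2)%R -> f x = 0%R} ->
  L1norm f <= L1norm (fun x => u x - f x)%R + L1norm (\1_(disk r) \* u)%R.
Proof.
move=> mf mu f_supp; have mdisk : measurable_fun setT (\1_(disk r) : R * R -> R).
  exact: measurable_indic (measurable_disk r).
rewrite /L1norm -ge0_integralD //; first last.
- by apply/measurable_EFinP/measurableT_comp => //; exact: measurable_funM.
- by apply/measurable_EFinP/measurableT_comp => //; exact: measurable_funB.
apply: ae_ge0_le_integral => //.
- exact/measurable_EFinP/measurableT_comp.
- by move=> x _; rewrite adde_ge0.
- by apply: emeasurable_funD; apply/measurable_EFinP/measurableT_comp => //;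
    [exact: measurable_funB|exact: measurable_funM].
case: f_supp => N [mN N0 fN]; exists N; split => // x /= Nx; apply: fN => /= fx0.
apply: Nx => _; rewrite -EFinD lee_fin indicE.
have [x_disk|x_out] := boolP (x \in disk r).
  rewrite mul1r addrC (le_trans _ (ler_normB (u x) (u x - f x)%R)) //.
  by rewrite opprB addrCA subrr addr0.
rewrite fx0 ?normr0 ?addr_ge0 //.
by move: x_out; rewrite notin_setE /disk /= leNgt => /negP.
Qed.

Lemma C1_R2_cst0 : C1_R2 (fun _ : R * R => 0%R).
Proof.
have D0 (v : R * R) : 'D_v (fun _ : R * R => 0%R) = cst 0%R.
  by apply/funext => x; exact: derive_cst.
by rewrite /C1_R2 !D0; split; [|split; [|split]] => *;
  [exact: derivable_cst|exact: derivable_cst|exact: cst_continuous|exact: cst_continuous].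
Qed.

Lemma C1c_field_cst0 : C1c_field (fun _ : R * R => 0%R) (fun _ => 0%R).
Proof.
split; [exact: C1_R2_cst0|split; [exact: C1_R2_cst0|]].
rewrite (_ : [set x | _] = set0) ?closure0; first exact: compact0.
by apply/seteqP; split => x //=; rewrite eqxx; case.
Qed.

Lemma aniso_TV_ge0 (u : R * R -> R) : 0 <= aniso_TV u.
Proof.
apply: ereal_sup_ubound; exists (fun _ => 0%R, fun _ => 0%R).
  by split => [|x]; [exact: C1c_field_cst0|rewrite normr0 ler01].
by rewrite /= integral0_eq // => x _; rewrite /div2 !derive_cst addr0 mulr0.
Qed.

Lemma aniso_TV_ae0 (u : R * R -> R) : {ae mu2, forall x, u x = 0%R} ->
  aniso_TV u = 0.
Proof.
move=> u0; apply/eqP; rewrite eq_le aniso_TV_ge0 andbT.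
apply: ge_ereal_sup => _ [v _ <-]; rewrite integral_ae0 //.
case: u0 => N [mN N0 uN]; exists N; split => // x /= Nx; apply: uN => /= ux0.
by apply: Nx; rewrite ux0 mul0r.
Qed.

Lemma BV_cst0 : BV (fun _ : R * R => 0%R).
Proof.
split; first exact: integrable0.
apply: (@le_lt_trans _ _ 0); last exact: ltey.
apply: ge_ereal_sup => _ [v _ <-].
by rewrite integral0_eq // => x _; rewrite mul0r.
Qed.

Lemma BV01_cst0 : BV01 (fun _ : R * R => 0%R).
Proof. by split; [exact: BV_cst0|apply: aeW => x; left]. Qed.

Lemma F1_ae0 (lam : R) (f u : R * R -> R) : L1 f -> L1 u ->
  {ae mu2, forall x, u x = 0%R} -> F1 lam f u = lam%:E * L1norm f.
Proof.
move=> /L1_measurable mf /L1_measurable mu u0.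
rewrite /F1 aniso_TV_ae0 // add0e /L1norm; congr (_ * _).
apply: ae_eq_integral => //.
- by apply/measurable_EFinP/measurableT_comp => //; exact: measurable_funB.
- exact/measurable_EFinP/measurableT_comp.
case: u0 => N [mN N0 uN]; exists N; split => // x /= Nx; apply: uN => /= ux0.
by apply: Nx => _; rewrite ux0 sub0r normrN.
Qed.

End total_variation.

Section zero_minimizer.
Context {R : realType} {f : R * R -> R} {Rad C lam : R}.
Local Notation mu2 := (@leb2 R).
Hypotheses (Lf : L1 f) (Rad_gt0 : 0 < Rad) (C_gt0 : 0 < C) (lam_ge0 : 0 <= lam).
Hypothesis f_supp :
  {ae mu2, forall x, Rad ^+ 2 <= x.1 ^+ 2 + x.2 ^+ 2 -> f x = 0}.
Hypothesis poincare : forall u, BV u ->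
  (C%:E * 'N[mu2]_2%:E[(fun x => (u x)%:E)] <= aniso_TV u)%E.
Local Open Scope ereal_scope.

Lemma lam_L1norm_f_le (u : R * R -> R) : BV u ->
  lam%:E * L1norm f <= lam%:E * L1norm (fun x => u x - f x)%R +
    (lam * (Rad * Num.sqrt pi) / C)%:E * aniso_TV u.
Proof.
move=> Bu; have [mf mu] := (L1_measurable Lf, L1_measurable Bu.1).
apply: le_trans (lee_wpmul2l _ (L1norm_supported_disk_le mf mu f_supp)) _.
  by rewrite lee_fin.
rewrite ge0_muleDr ?L1norm_ge0 //; apply: leeD2l.
apply: le_trans (lee_wpmul2l _ (L1norm_indic_disk_le Rad_gt0 mu)) _.
  by rewrite lee_fin.
have k_ge0 : (0 <= lam * (Rad * Num.sqrt pi) / C)%R.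
  by rewrite divr_ge0 ?mulr_ge0 ?sqrtr_ge0 ?(ltW Rad_gt0) ?(ltW C_gt0).
rewrite muleA -EFinM (_ : (lam * _)%:E = (lam * (Rad * Num.sqrt pi) / C)%:E * C%:E).
  by rewrite -muleA; apply: lee_wpmul2l; [exact: k_ge0 | exact: poincare].
by rewrite -EFinM divfK ?lt0r_neq0.
Qed.

Lemma aniso_TV_eq0 (u : R * R -> R) : BV u -> aniso_TV u = 0 ->
  {ae mu2, forall x, u x = 0%R}.
Proof.
move=> Bu TVu0; have := poincare u Bu.
rewrite TVu0 pmule_rle0 ?lte_fin // => N2u_le0.
have N2u0 : 'N[mu2]_2%:E[(fun x => (u x)%:E)] = 0.
  by apply/eqP; rewrite eq_le N2u_le0 Lnorm_ge0.
have := Lnorm_eq0_eq0 (integrableP _ _ _ Bu.1).1 (_ : 0 < 2%:E) N2u0.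
case=> [|N [mN N0 uN]]; first by rewrite lte_fin.
by exists N; split => // x /= Nx; apply: uN => /= ux; apply: Nx; case: (ux I).
Qed.

Hypothesis lam_lt : (lam < C / (Rad * Num.sqrt pi))%R.

Lemma F1_cst0_le (u : R * R -> R) : BV u ->
  F1 lam f (fun _ => 0%R) <= F1 lam f u /\
  (F1 lam f u <= F1 lam f (fun _ => 0%R) -> aniso_TV u = 0).
Proof.
move=> Bu; rewrite F1_ae0 //; last 2 first.
- exact: BV_cst0.1.
- exact: aeW.
have sqrtpi_gt0 : (0 < Num.sqrt pi :> R)%R by rewrite sqrtr_gt0 pi_gt0.
rewrite /F1; apply: (lee_absorb _ _ _ _ (lam_L1norm_f_le u Bu)).
- by rewrite fin_numM ?L1norm_fin_num.
- by rewrite mule_ge0 ?L1norm_ge0.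
- exact: aniso_TV_ge0.
rewrite divr_ge0 ?mulr_ge0 ?sqrtr_ge0 ?(ltW Rad_gt0) ?(ltW C_gt0) //=.
by rewrite ltr_pdivrMr // mul1r -ltr_pdivlMr ?mulr_gt0.
Qed.

End zero_minimizer.

Theorem mainTheorem1 (R : realType) (f : R * R -> R) (Rad C lam : R) :
  L1 f -> 0 < Rad ->
  {ae @leb2 R, forall x, Rad ^+ 2 <= x.1 ^+ 2 + x.2 ^+ 2 -> f x = 0} ->
  0 < C ->
  (forall u, BV u -> (C%:E * 'N[@leb2 R]_2%:E[(fun x => (u x)%:E)] <= aniso_TV u)%E) ->
  0 <= lam -> lam < C / (Rad * Num.sqrt pi) ->
  (forall u, minimizer (@BV R) (F1 lam f) u <-> (BV u /\ {ae @leb2 R, forall x, u x = 0})) /\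
  (forall u, minimizer (@BV01 R) (F1 lam f) u <-> (BV01 u /\ {ae @leb2 R, forall x, u x = 0})).
Proof.
move=> Lf Rad_gt0 f_supp C_gt0 poincare lam_ge0 lam_lt.
have F1_cst0 := F1_cst0_le Lf Rad_gt0 C_gt0 lam_ge0 f_supp poincare lam_lt.
have F1_ae0_cst0 u : L1 u -> {ae @leb2 R, forall x, u x = 0} ->
    F1 lam f u = F1 lam f (fun _ => 0).
  by move=> Lu u0; rewrite !F1_ae0 //; [exact: BV_cst0.1 | exact: aeW].
have le_cst0_ae0 u : BV u -> (F1 lam f u <= F1 lam f (fun _ => 0%R))%E ->
    {ae @leb2 R, forall x, u x = 0}.
  by move=> Bu /(F1_cst0 u Bu).2; exact: aniso_TV_eq0 C_gt0 poincare u Bu.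
split=> u; split.
- by case=> Bu umin; split => //; apply: le_cst0_ae0 => //; exact: umin _ BV_cst0.
- case=> Bu u0; split => // w Bw; rewrite F1_ae0_cst0 //; last exact: Bu.1.
  exact: (F1_cst0 w Bw).1.
- by case=> Bu umin; split => //; apply: le_cst0_ae0 Bu.1 _; exact: umin _ BV01_cst0.
- case=> Bu u0; split => // w Bw; rewrite F1_ae0_cst0 //; last exact: Bu.1.1.
  exact: (F1_cst0 w Bw.1).1.
Qed.
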